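(* The set $\mathbb{P}_2$ is a $\mathbf{\Pi}^1_2$-complete subset of $2^{[\mathbb{N}]^{<\omega}}$.
   Context: $2^{[\mathbb{N}]^{<\omega}}$ is the Cantor space of subsets of the countable set $[\mathbb{N}]^{<\omega}$ of finite subsets of $\mathbb{N}$. For finite $s$ and $t\subseteq\mathbb{N}$, $s\sqsubseteq t$ means $s=t\cap\{0,\dots,n\}$ for some $n$. $\mathbb{P}_2$ is the set of all $\mathcal{F}\subseteq[\mathbb{N}]^{<\omega}$ such that there is no infinite $y\subseteq\mathbb{N}$ with the property that every infinite $z\subseteq y$ has an initial segment $s\sqsubseteq z$ with $s\in\mathcal{F}$. *)

From mathcomp Require Import all_boot.
Set Implicit Arguments. Unset Strict Implicit. Unset Printing Implicit Defensive.

(** Finite subsets of N, represented canonically as strictly increasing lists. *)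
Definition finset_nat := {s : seq nat | sorted ltn s}.

Definition infinite_set (z : nat -> bool) : Prop := forall n, exists m, n <= m /\ z m.

Definition init_seg (s : finset_nat) (z : nat -> bool) : Prop :=
  exists n, forall k, (k \in val s) = (k <= n) && z k.

Definition Xspace := finset_nat -> bool.

Definition P2 (F : Xspace) : Prop :=
  ~ exists y : nat -> bool, infinite_set y /\
      forall z : nat -> bool, (forall k, z k -> y k) -> infinite_set z ->
        exists s, init_seg s z /\ F s.

(** Product topology on I -> A (A discrete): agreement on finitely many coordinates. *)
Definition agree (I : eqType) (A : Type) (L : seq I) (x y : I -> A) : Prop :=
  forall i, i \in L -> x i = y i.

Definition agree_upto (A : Type) (N : nat) (a b : nat -> A) : Prop :=
  forall n, n < N -> a n = b n.

Definition closed3 (I : eqType) (A : Type)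
    (C : (I -> A) -> (nat -> nat) -> (nat -> nat) -> Prop) : Prop :=
  forall x a b, ~ C x a b ->
    exists (L : seq I) (N : nat), forall y a' b',
      agree L x y -> agree_upto N a a' -> agree_upto N b b' -> ~ C y a' b'.

(** Boldface projective classes, following the standard definitions:
    Sigma^1_1 = projections of closed sets along N^N, Pi^1_1 = complements,
    Sigma^1_2 = projections of Pi^1_1 sets along N^N, Pi^1_2 = complements. *)
Definition Sigma11_2 (I : eqType) (A : Type)
    (P : (I -> A) -> (nat -> nat) -> Prop) : Prop :=
  exists C, closed3 C /\ forall x a, P x a <-> exists b, C x a b.

Definition Pi11_2 (I : eqType) (A : Type)
    (P : (I -> A) -> (nat -> nat) -> Prop) : Prop :=
  Sigma11_2 (fun x a => ~ P x a).

Definition Sigma12 (I : eqType) (A : Type) (S : (I -> A) -> Prop) : Prop :=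
  exists P, Pi11_2 P /\ forall x, S x <-> exists a, P x a.

Definition Pi12 (I : eqType) (A : Type) (S : (I -> A) -> Prop) : Prop :=
  Sigma12 (fun x => ~ S x).

Definition continuous_map (I J : eqType) (A B : Type) (f : (I -> A) -> (J -> B)) : Prop :=
  forall x j, exists L : seq I, forall y, agree L x y -> f y j = f x j.

Definition Pi12_complete (J : eqType) (B : Type) (S : (J -> B) -> Prop) : Prop :=
  Pi12 S /\
  forall T : (nat -> nat) -> Prop, Pi12 (I := nat) T ->
    exists f : (nat -> nat) -> (J -> B),
      continuous_map (I := nat) f /\ forall y, T y <-> S (f y).

From mathcomp Require Import all_boot.
From mathcomp Require Import boolp.
Set Implicit Arguments. Unset Strict Implicit. Unset Printing Implicit Defensive.

(** Membership: [P2 F] says that every set [y] is finite or has an infinite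
    subset [z] no initial segment of which lies in [F]; coding [y] and [z] by
    points [a] and [b] of the Baire space puts this in the form
    [forall a, exists b, R F a b] with [R] closed.

    Hardness: write a [Pi12] set as [forall a, exists b, C y a b] with [C]
    closed, and code finite sequences by integers. Let [F_y] contain the sets
    [{m_0 < ... < m_k}] (with [k >= 1]) decoding to a chain of strict
    prefixes [u_0, ..., u_k] such that no [t] of length [k] with [t_i < m_i]
    is a node of the tree of [C] above [(y, u_k)]. If no [b] works for some
    [a], the codes of the prefixes of [a] form a set [w] witnessing the
    failure of [P2 F_y]: an infinite subset with no initial segment in [F_y]
    would give arbitrarily high nodes above [(y, a)] bounded by its
    enumeration, hence a branch [b] by König's lemma. Conversely a witness
    [w] decodes to a chain whose limit is such an [a]: given [b], a
    subsequence of [w] outgrowing [b] has an initial segment in [F_y],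
    which the node [b|k] contradicts. *)

Section StrictlyIncreasing.
Variable e : nat -> nat.
Hypothesis e_incr : forall i, e i < e i.+1.

Lemma incr_ltn_mono : {mono e : i j / i < j}.
Proof. exact/leqW_mono/leq_mono/(homo_ltn ltn_trans). Qed.

Lemma incr_leq_mono : {mono e : i j / i <= j}.
Proof. exact/leq_mono/(homo_ltn ltn_trans). Qed.

Lemma leq_incr i : i <= e i.
Proof. by elim: i => // i IHi; apply: leq_ltn_trans IHi (e_incr i). Qed.

(** [k <= e k] is what makes this bounded search exhaustive. *)
Definition range (k : nat) : bool := has (fun i => e i == k) (iota 0 k.+1).

Lemma rangeP k : reflect (exists i, e i = k) (range k).
Proof.
apply: (iffP hasP) => [[i _ /eqP]|[i <-]]; first by exists i.
by exists i; rewrite ?mem_iota ?ltnS ?leq_incr.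
Qed.

Lemma range_infinite : infinite_set range.
Proof.
by move=> n; exists (e n); split; [apply: leq_incr | apply/rangeP; exists n].
Qed.

Lemma sorted_mkseq_incr n : sorted ltn (mkseq e n).
Proof. exact: homo_sorted (homo_ltn ltn_trans e_incr) _ (iota_ltn_sorted 0 n). Qed.

End StrictlyIncreasing.

Lemma sorted_mkseq (T : Type) (r : rel T) (f : nat -> T) n :
  (forall i, r (f i) (f i.+1)) -> sorted r (mkseq f n).
Proof.
rewrite /mkseq; move=> fr; elim: n 0 => [|n IHn] m //=.
by case: n IHn => //= n /(_ m.+1) /= ->; rewrite fr.
Qed.

Lemma infinite_enum (z : nat -> bool) : infinite_set z ->
  exists2 e, (forall i, e i < e i.+1) & z = range e.
Proof.
move=> z_inf.
have next_ex m : exists k, (m <= k) && z k.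
  by have [k [mk zk]] := z_inf m; exists k; rewrite mk zk.
pose next m := ex_minn (next_ex m).
have nextP m : [/\ m <= next m, z (next m) & forall k, m <= k -> z k -> next m <= k].
  rewrite /next; case: ex_minnP => n /andP[mn zn] min_n.
  by split=> // k mk zk; apply: min_n; rewrite mk zk.
pose fix e i := next (if i is i'.+1 then (e i').+1 else 0).
have e_incr i : e i < e i.+1 by have [] := nextP (e i).+1.
exists e => //; apply/funext => k; apply/idP/(rangeP e_incr) => [zk|[i <-]]; last first.
  by case: i => [|i]; [have [_ ? _] := nextP 0 | have [_ ? _] := nextP (e i).+1].
suff enum_le n : k <= e n -> exists i, e i = k by exact/enum_le/leq_incr.
elim: n => [|n IHn] kn.
  by have [_ _ /(_ k isT zk) ?] := nextP 0; exists 0; apply/eqP; rewrite eqn_leq kn andbT.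
case: (leqP k (e n)) => [/IHn //|nk].
have [_ _ /(_ k nk zk) ?] := nextP (e n).+1.
by exists n.+1; apply/eqP; rewrite eqn_leq kn andbT.
Qed.

(** Codes the infinite subsets of [N] by points of the Baire space. *)
Fixpoint incr_seq (b : nat -> nat) (i : nat) : nat :=
  if i is i'.+1 then incr_seq b i' + (b i).+1 else b 0.

Lemma incr_seqS b i : incr_seq b i < incr_seq b i.+1.
Proof. by rewrite /= addnS ltnS leq_addr. Qed.

Lemma leq_incr_seq b i : b i <= incr_seq b i.
Proof. by case: i => //= i; apply: leq_trans (leqnSn _) (leq_addl _ _). Qed.

Lemma incr_seq_agree b b' i : agree_upto i.+1 b b' -> incr_seq b i = incr_seq b' i.
Proof.
elim: i => [|i IHi] bb'; first by rewrite /= bb'.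
by rewrite /= IHi ?bb' // => n ni; apply: bb'; apply: ltnW.
Qed.

Lemma incr_seq_onto e : (forall i, e i < e i.+1) -> exists b, incr_seq b =1 e.
Proof.
move=> e_incr; exists (fun i => if i is i'.+1 then e i - (e i').+1 else e 0).
by elim=> [|i IHi] //=; rewrite IHi addnS -addSn subnKC.
Qed.

Definition init_seq (z : nat -> bool) (N : nat) : seq nat := [seq k <- iota 0 N.+1 | z k].

Lemma mem_init_seq z N k : (k \in init_seq z N) = (k <= N) && z k.
Proof. by rewrite mem_filter mem_iota add0n ltnS andbC. Qed.

Lemma sorted_init_seq z N : sorted ltn (init_seq z N).
Proof. exact/sorted_filter/iota_ltn_sorted/ltn_trans. Qed.

Definition init_fset z N : finset_nat := exist _ (init_seq z N) (sorted_init_seq z N).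

Lemma init_seg_init_fset z N : init_seg (init_fset z N) z.
Proof. by exists N => k; rewrite mem_init_seq. Qed.

Lemma init_segP s z : init_seg s z -> exists N, s = init_fset z N.
Proof.
case=> N sE; exists N; apply: val_inj; apply: (irr_sorted_eq ltn_trans ltnn).
- exact: valP s.
- exact: sorted_init_seq.
- by move=> k; rewrite sE mem_init_seq.
Qed.

Section RangeInitSeq.
Variable e : nat -> nat.
Hypothesis e_incr : forall i, e i < e i.+1.

Lemma init_seq_range_card N c : (forall i, (i < c) = (e i <= N)) ->
  init_seq (range e) N = mkseq e c.
Proof.
move=> cE; apply: (irr_sorted_eq ltn_trans ltnn).
- exact: sorted_init_seq.
- exact: sorted_mkseq_incr.
move=> k; rewrite mem_init_seq; apply/andP/mapP => [[kN /(rangeP e_incr)[i ek]]|[i]].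
  by exists i; rewrite // mem_iota cE ek.
by rewrite mem_iota cE => ? ->; split=> //; apply/(rangeP e_incr); exists i.
Qed.

Lemma init_seq_range N : exists c, init_seq (range e) N = mkseq e c.
Proof.
have ex_big : exists i, N < e i by exists N.+1; apply: leq_incr.
exists (ex_minn ex_big); apply: init_seq_range_card => i.
case: ex_minnP => c Nc min_c; apply/idP/idP => [ic|].
  by rewrite leqNgt; apply/negP => /min_c; rewrite leqNgt ic.
apply: contraLR; rewrite -leqNgt -ltnNge => ci.
by apply: leq_trans Nc _; rewrite incr_leq_mono.
Qed.

Lemma init_seq_range_at i : init_seq (range e) (e i) = mkseq e i.+1.
Proof. by apply: init_seq_range_card => j; rewrite ltnS (incr_leq_mono e_incr). Qed.

End RangeInitSeq.

Definition clopen3 (I : eqType) (A : Type)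
    (D : (I -> A) -> (nat -> nat) -> (nat -> nat) -> Prop) : Prop :=
  forall x a b, exists (L : seq I) (N : nat), forall y a' b',
    agree L x y -> agree_upto N a a' -> agree_upto N b b' -> (D y a' b' <-> D x a b).

Lemma agree_uptoW (A : Type) N M (a b : nat -> A) :
  N <= M -> agree_upto M a b -> agree_upto N a b.
Proof. by move=> NM ab n nN; apply: ab; apply: leq_trans NM. Qed.

Section ClosedSets.
Variables (I : eqType) (A : Type).
Implicit Types C D : (I -> A) -> (nat -> nat) -> (nat -> nat) -> Prop.

Lemma closed3_forall (D : nat -> (I -> A) -> (nat -> nat) -> (nat -> nat) -> Prop) :
  (forall n, clopen3 (D n)) -> closed3 (fun x a b => forall n, D n x a b).
Proof.
move=> D_clopen x a b /existsNP[n Dn].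
have [L [N LN]] := D_clopen n x a b.
by exists L, N => y a' b' xy aa' bb' Dy; apply/Dn/(LN y a' b').
Qed.

Lemma closed3_or C D : closed3 C -> closed3 D -> closed3 (fun x a b => C x a b \/ D x a b).
Proof.
move=> C_closed D_closed x a b /not_orP[Cx Dx].
have [L1 [N1 CN]] := C_closed x a b Cx; have [L2 [N2 DN]] := D_closed x a b Dx.
exists (L1 ++ L2), (maxn N1 N2) => y a' b' xy aa' bb'.
have xy1 : agree L1 x y by move=> i iL; apply: xy; rewrite mem_cat iL.
have xy2 : agree L2 x y by move=> i iL; apply: xy; rewrite mem_cat iL orbT.
case; [apply: CN | apply: DN] => //; apply: agree_uptoW aa' || apply: agree_uptoW bb';
  by rewrite ?leq_maxl ?leq_maxr.
Qed.

Lemma Pi12P (S : (I -> A) -> Prop) :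
  Pi12 S <-> exists C, closed3 C /\ forall x, S x <-> forall a, exists b, C x a b.
Proof.
split=> [[P [[C [C_closed CP]] SP]]|[C [C_closed SC]]].
  exists C; split=> // x; rewrite -[S x]not_notE (propext (SP x)) -forallNE.
  by split=> nP a; apply/CP; apply: nP.
exists (fun x a => ~ exists b, C x a b); split.
  by exists C; split=> // x a; rewrite not_notE.
by move=> x; rewrite SC existsNE.
Qed.

End ClosedSets.

Lemma init_fset_range_agree b b' N : agree_upto N.+1 b b' ->
  init_fset (range (incr_seq b)) N = init_fset (range (incr_seq b')) N.
Proof.
move=> bb'; apply: val_inj; apply: eq_in_filter => k; rewrite mem_iota ltnS => kN.
apply: eq_in_has => i; rewrite mem_iota ltnS => ik /=.
by rewrite (@incr_seq_agree b b' i) //; apply: agree_uptoW bb'; rewrite ltnS (leq_trans ik).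
Qed.

(** [a] codes [{k | a k != 0}] and [b] either bounds it or codes an infinite
    subset of it with no initial segment in [F]. *)
Definition P2_refutation (F : Xspace) (a b : nat -> nat) : Prop :=
  (forall m, b 0 <= m -> a m = 0) \/
  (forall n, a (incr_seq b n) <> 0 /\ ~~ F (init_fset (range (incr_seq b)) n)).

Lemma P2_refutation_closed : closed3 P2_refutation.
Proof.
apply: closed3_or.
  apply: closed3_forall => m F a b; exists [::], m.+1 => G a' b' _ aa' bb'.
  by rewrite -(aa' m) // -(bb' 0).
apply: closed3_forall => n F a b.
exists [:: init_fset (range (incr_seq b)) n], (incr_seq b n).+1 => G a' b' FG aa' bb'.
have bb'n : agree_upto n.+1 b b'.
  by apply: agree_uptoW bb'; rewrite ltnS; apply: leq_incr (@incr_seqS b) n.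
rewrite -(incr_seq_agree bb'n) -(aa' _) // -(init_fset_range_agree bb'n) -FG //.
exact: mem_head.
Qed.

Lemma P2_forall_exists F : P2 F <-> forall a, exists b, P2_refutation F a b.
Proof.
split=> [P2F a | refute [y [y_inf yP]]].
  have [a_inf|a_fin] := EM (infinite_set (fun k => a k != 0)); last first.
    move/existsNP: a_fin => [n /forallNP a_fin]; exists (fun=> n); left => m nm.
    by apply/eqP/negPn/negP => am0; apply: (a_fin m).
  have /existsNP[z /not_implyP[za /not_implyP[z_inf zF]]] :
      ~ forall z : nat -> bool, (forall k, z k -> a k != 0) -> infinite_set z ->
        exists s, init_seg s z /\ F s.
    by move=> aP; apply: P2F; exists (fun k => a k != 0).
  have [e e_incr ze] := infinite_enum z_inf; have [b be] := incr_seq_onto e_incr.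
  have {be}eb : e = incr_seq b by apply/funext => i; rewrite be.
  exists b; right => n; rewrite -eb; split.
    by apply/eqP/za; rewrite ze; apply/(rangeP e_incr); exists n.
  apply/negP => Fn; apply: zF; exists (init_fset z n).
  by rewrite ze; split=> //; apply: init_seg_init_fset.
have [b [a0|zP]] := refute (fun k => y k : nat).
  by have [m [bm ym]] := y_inf (b 0); move: (a0 m bm); rewrite ym.
have [|s [sz Fs]] := yP (range (incr_seq b)) _ (range_infinite (@incr_seqS b)).
  by move=> k /(rangeP (@incr_seqS b))[n <-]; have [+ _] := zP n; case: (y _).
have [N sN] := init_segP sz; have [_] := zP N.
by rewrite -sN Fs.
Qed.

(** The extra argument [q] lets every finite sequence be coded above any bound. *)
Definition seq_code (s : seq nat) (q : nat) : nat := 2 ^ pickle s * q.*2.+1.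

Definition seq_decode (m : nat) : seq nat := odflt [::] (unpickle (logn 2 m)).

Lemma seq_codeK s q : seq_decode (seq_code s q) = s.
Proof.
rewrite /seq_decode /seq_code lognM ?expn_gt0 // pfactorK //.
have -> : logn 2 q.*2.+1 = 0 by rewrite lognE /= dvdn2 /= odd_double.
by rewrite addn0 pickleK.
Qed.

Lemma seq_code_gt s q : q < seq_code s q.
Proof.
apply: (@leq_trans q.*2.+1); first by rewrite ltnS -addnn leq_addr.
by rewrite leq_pmull // expn_gt0.
Qed.

Section Trees.
Variable C : (nat -> nat) -> (nat -> nat) -> (nat -> nat) -> Prop.

Definition in_tree (y a : nat -> nat) (t : seq nat) : Prop :=
  exists y' a' b', [/\ agree_upto (size t) y y', agree_upto (size t) a a',
    agree_upto (size t) (nth 0 t) b' & C y' a' b'].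

Lemma in_tree_take y a t j : in_tree y a t -> in_tree y a (take j t).
Proof.
have tj : size (take j t) <= size t by rewrite size_take_min geq_minr.
case=> y' [a' [b' [yy' aa' tb' Cb']]]; exists y', a', b'; split=> //.
- exact: agree_uptoW yy'.
- exact: agree_uptoW aa'.
by move=> i; rewrite size_take_min ltn_min => /andP[ij it]; rewrite nth_take ?tb'.
Qed.

Lemma in_tree_agree y y2 a a2 t : agree_upto (size t) y y2 ->
  agree_upto (size t) a a2 -> in_tree y a t -> in_tree y2 a2 t.
Proof.
move=> yy2 aa2 [y' [a' [b' [yy' aa' tb' Cb']]]]; exists y', a', b'.
by split=> // i it; [rewrite -yy2 ?yy' | rewrite -aa2 ?aa'].
Qed.

Lemma in_tree_mkseq y a b m : C y a b -> in_tree y a (mkseq b m).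
Proof. by exists y, a, b; split=> // i; rewrite size_mkseq => im; rewrite nth_mkseq. Qed.

Lemma closed3_in_tree y a b : closed3 C ->
  (forall m, in_tree y a (mkseq b m)) -> C y a b.
Proof.
move=> C_closed b_tree; apply: contrapT => /C_closed[L [N LN]].
have [y' [a' [b' []]]] := b_tree (N + \max_(i <- L) i).+1.
rewrite size_mkseq => yy' aa' bb'; apply: LN.
- move=> i iL; apply: yy'; rewrite ltnS (leq_trans _ (leq_addl _ _)) //.
  exact: (@leq_bigmax_seq _ L xpredT id i iL isT).
- by apply: agree_uptoW aa'; apply/leqW/leq_addr.
by move=> i iN; rewrite -bb' ?nth_mkseq // ltnS (leq_trans (ltnW iN)) ?leq_addr.
Qed.

End Trees.

Section Konig.
Variables (Q : seq nat -> Prop) (B : nat -> nat).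
Hypothesis Q_take : forall t j, Q t -> Q (take j t).
Hypothesis Q_bounded : forall t i, Q t -> i < size t -> nth 0 t i < B i.

Let extendable t m := exists u, size u = m /\ Q (t ++ u).
Let everywhere_extendable t := forall m, extendable t m.

Lemma extendableW t m M : m <= M -> extendable t M -> extendable t m.
Proof.
move=> mM [u [uM Qtu]]; exists (take m u); split; first by rewrite size_takel ?uM.
by move: (Q_take (size t + m) Qtu); rewrite take_cat ltnNge leq_addr addKn.
Qed.

Lemma everywhere_extendable_rcons t :
  everywhere_extendable t -> exists x, everywhere_extendable (rcons t x).
Proof.
move=> t_ext; apply: contrapT => /forallNP no_ext.
have /choice[m mP] x : exists m, ~ extendable (rcons t x) m by apply/existsNP/no_ext.
have [[|x u] [//= [uM] Qtxu]] := t_ext (\max_(x < B (size t)) m x).+1.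
have xB : x < B (size t).
  have := @Q_bounded _ (size t) Qtxu; rewrite nth_cat ltnn subnn size_cat /= addnS.
  by rewrite ltnS leq_addr; apply.
have xM : m x <= \max_(x < B (size t)) m x by apply: (leq_bigmax (Ordinal xB)).
apply/(mP x)/(extendableW xM).
by exists u; rewrite cat_rcons uM.
Qed.

Lemma konig : (forall m, exists t, size t = m /\ Q t) ->
  exists b, forall m, Q (mkseq b m).
Proof.
move=> Q_levels.
have /choice[g gP] t : exists x,
    everywhere_extendable t -> everywhere_extendable (rcons t x).
  have [/everywhere_extendable_rcons[x]|] := EM (everywhere_extendable t); first by exists x.
  by exists 0.
pose fix branch n := if n is n'.+1 then rcons (branch n') (g (branch n')) else [::].
have branch_ext n : everywhere_extendable (branch n).
  by elim: n => [m|n /gP //]; have [t [tm Qt]] := Q_levels m; exists t.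
exists (fun n => g (branch n)) => m.
have -> : mkseq (fun n => g (branch n)) m = branch m.
  by elim: m => // m IHm; rewrite mkseqS IHm.
by have [u [/size0nil -> Q0]] := branch_ext m 0; rewrite cats0 in Q0.
Qed.

End Konig.

Definition strict_prefix (u v : seq nat) : bool := prefix u v && (size u < size v).

Lemma strict_prefix_mkseq (a : nat -> nat) m n :
  m < n -> strict_prefix (mkseq a m) (mkseq a n).
Proof.
move=> mn; rewrite /strict_prefix !size_mkseq mn andbT prefixE size_mkseq.
by rewrite /mkseq -map_take take_iota (minn_idPl (ltnW mn)).
Qed.

Lemma nth_prefix u v i : prefix u v -> i < size u -> nth 0 u i = nth 0 v i.
Proof. by move=> /prefixP[w ->] iu; rewrite nth_cat iu. Qed.

Lemma strict_prefix_chain_limit (u : nat -> seq nat) :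
  (forall i, strict_prefix (u i) (u i.+1)) ->
  exists a, forall i, i <= size (u i) /\ u i = mkseq a (size (u i)).
Proof.
move=> u_chain.
have u_prefix : {homo u : i j / i <= j >-> prefix i j}.
  apply: (@homo_leq _ u (fun s t => prefix s t) (@prefix_refl _) (@prefix_trans _)) => i.
  by case/andP: (u_chain i).
have u_size i : i <= size (u i).
  by elim: i => // i IHi; case/andP: (u_chain i) => _; apply: leq_ltn_trans.
exists (fun k => nth 0 (u k.+1) k) => i; split=> //.
apply: (@eq_from_nth _ 0); rewrite ?size_mkseq // => k ki; rewrite nth_mkseq //.
rewrite (nth_prefix (u_prefix i _ (leq_maxl i k.+1)) ki).
by rewrite (nth_prefix (u_prefix k.+1 _ (leq_maxr i k.+1)) (u_size k.+1)).
Qed.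

Definition bounded_by (B : nat -> nat) (t : seq nat) : Prop :=
  forall i, i < size t -> nth 0 t i < B i.

Lemma bounded_by_take B t j : bounded_by B t -> bounded_by B (take j t).
Proof.
move=> tB i; rewrite size_take_min ltn_min => /andP[ij it].
by rewrite nth_take // tB.
Qed.

Fixpoint prefix_code (a : nat -> nat) (n : nat) : nat :=
  seq_code (mkseq a n.+1) (if n is n'.+1 then prefix_code a n' else 0).

Lemma prefix_codeK a n : seq_decode (prefix_code a n) = mkseq a n.+1.
Proof. by case: n => [|n]; apply: seq_codeK. Qed.

Lemma prefix_code_incr a n : prefix_code a n < prefix_code a n.+1.
Proof. exact: seq_code_gt. Qed.

Section Reduction.
Variable C : (nat -> nat) -> (nat -> nat) -> (nat -> nat) -> Prop.

Definition refuting (y : nat -> nat) (s : seq nat) : Prop :=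
  [/\ 1 < size s, sorted (relpre seq_decode strict_prefix) s &
    ~ exists t, [/\ size t = (size s).-1,
      in_tree C y (nth 0 (seq_decode (last 0 s))) t & bounded_by (nth 0 s) t]].

Definition reduction (y : nat -> nat) : Xspace := fun s => `[< refuting y (val s) >].

Lemma refuting_agree y y' s : agree_upto (size s) y y' -> refuting y s -> refuting y' s.
Proof.
move=> yy' [s2 s_chain no_node]; split=> // -[t [tE t_tree tB]]; apply: no_node.
exists t; split=> //; apply: in_tree_agree t_tree => // i.
by rewrite tE => it; rewrite yy' // (leq_trans it (leq_pred _)).
Qed.

Lemma reduction_continuous : continuous_map (I := nat) reduction.
Proof.
move=> y s; exists (iota 0 (size (val s))) => y' yy'.
have yy'_upto : agree_upto (size (val s)) y y' by move=> i i_s; rewrite yy' ?mem_iota.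
by apply/asbool_equiv_eq; split; apply: refuting_agree => // i /yy'_upto ->.
Qed.

Lemma unrefuted_node y a e j m : (forall i, j i < j i.+1) ->
    (forall i, seq_decode (e i) = mkseq a (j i).+1) ->
    ~ refuting y (mkseq e m.+2) ->
  exists t, size t = m.+1 /\ (in_tree C y a t /\ bounded_by e t).
Proof.
move=> j_incr eE unref.
have [t [tE t_tree tB]] : exists t, [/\ size t = m.+1,
    in_tree C y (nth 0 (seq_decode (e m.+1))) t & bounded_by e t].
  apply: contrapT => no_node; apply: unref; split; rewrite ?size_mkseq //.
    by apply: sorted_mkseq => i /=; rewrite !eE strict_prefix_mkseq // ltnS j_incr.
  case=> t [tE t_tree tB]; apply: no_node; exists t.
  rewrite mkseqS last_rcons in t_tree; split=> // i it.
  by rewrite -(@nth_mkseq _ 0 e m.+2) ?tB // (leq_trans it) ?tE.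
exists t; split=> //; split=> //; apply: in_tree_agree t_tree => // i.
by rewrite tE eE => im; rewrite nth_mkseq // ltnS (leq_trans _ (leq_incr j_incr _)) // ltnW.
Qed.

Lemma branch_of_unrefuted y a e j : closed3 C -> (forall i, j i < j i.+1) ->
    (forall i, seq_decode (e i) = mkseq a (j i).+1) ->
    (forall n, ~ refuting y (mkseq e n.+2)) ->
  exists b, C y a b.
Proof.
move=> C_closed j_incr eE unref.
pose Q t := in_tree C y a t /\ bounded_by e t.
have Q_take t k : Q t -> Q (take k t).
  by case=> t_tree tB; split; [apply: in_tree_take | apply: bounded_by_take].
have Q_bounded t i : Q t -> i < size t -> nth 0 t i < e i by case=> _ /(_ i).
have Q_levels m : exists t, size t = m /\ Q t.
  have [t [tE Qt]] := unrefuted_node j_incr eE (unref m).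
  by exists (take m t); rewrite size_takel ?tE //; split=> //; apply: Q_take.
have [b Qb] := konig Q_take Q_bounded Q_levels.
by exists b; apply: closed3_in_tree C_closed _ => m; case: (Qb m).
Qed.

Lemma reduction_sound y a : closed3 C -> (forall b, ~ C y a b) -> ~ P2 (reduction y).
Proof.
move=> C_closed aP; apply; exists (range (prefix_code a)).
split=> [|z zw z_inf]; first exact: range_infinite (@prefix_code_incr a).
apply: contrapT => no_seg.
have [e e_incr ze] := infinite_enum z_inf.
have /choice[j je] i : exists j, prefix_code a j = e i.
  by apply/(rangeP (@prefix_code_incr a))/zw; rewrite ze; apply/(rangeP e_incr); exists i.
have j_incr i : j i < j i.+1 by rewrite -(incr_ltn_mono (@prefix_code_incr a)) !je.
have unref n : ~ refuting y (mkseq e n.+2).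
  move=> ref; apply: no_seg; exists (init_fset z (e n.+1)).
  by split; [apply: init_seg_init_fset | apply/asboolP; rewrite /= ze init_seq_range_at].
have eE i : seq_decode (e i) = mkseq a (j i).+1 by rewrite -je prefix_codeK.
have [b] := branch_of_unrefuted C_closed j_incr eE unref.
exact: aP.
Qed.

Lemma refuting_subseq y (w : nat -> bool) ez :
    (forall z : nat -> bool, (forall k, z k -> w k) -> infinite_set z ->
      exists s, init_seg s z /\ reduction y s) ->
    (forall i, ez i < ez i.+1) -> (forall i, w (ez i)) ->
  exists c, refuting y (mkseq ez c.+2).
Proof.
move=> wP ez_incr w_ez.
have [|s [sz s_ref]] := wP (range ez) _ (range_infinite ez_incr).
  by move=> k /(rangeP ez_incr)[i <-].
have [N sN] := init_segP sz; have [c cE] := init_seq_range ez_incr N.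
move: s_ref; rewrite sN => /asboolP; rewrite /= cE => s_ref.
by case: c {cE} s_ref => [|[|c]] s_ref; [case: s_ref | case: s_ref | exists c].
Qed.

Lemma reduction_complete y : ~ P2 (reduction y) -> exists a, forall b, ~ C y a b.
Proof.
move=> /contrapT[w [w_inf wP]].
have [e e_incr we] := infinite_enum w_inf.
have w_e i : w (e i) by rewrite we; apply/(rangeP e_incr); exists i.
have chain i : strict_prefix (seq_decode (e i)) (seq_decode (e i.+1)).
  have shift_incr k : e (i + k) < e (i + k.+1) by rewrite addnS.
  have [c [_ /= /andP[+ _] _]] := refuting_subseq wP shift_incr (fun k => w_e _).
  by rewrite addn0 addn1.
have [a aE] := strict_prefix_chain_limit chain.
exists a => b Cb.
pose h := incr_seq (fun j => (b j).+1).
have eh_incr i : e (h i) < e (h i.+1) by rewrite incr_ltn_mono ?incr_seqS.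
have [c [_ _]] := refuting_subseq wP eh_incr (fun i => w_e _); apply.
exists (mkseq b c.+1); split; first by rewrite !size_mkseq.
  rewrite mkseqS last_rcons /=; apply: in_tree_agree (in_tree_mkseq _ Cb) => // i.
  have [hc ->] := aE (h c.+1); rewrite size_mkseq => ic; rewrite nth_mkseq //.
  by apply: leq_trans ic (leq_trans (leq_incr (@incr_seqS _) _) hc).
move=> i; rewrite size_mkseq => ic; rewrite !nth_mkseq ?(leqW ic) //=.
exact: leq_trans (leq_incr_seq _ i) (leq_incr e_incr _).
Qed.

Lemma P2_reduction y : closed3 C -> P2 (reduction y) <-> forall a, exists b, C y a b.
Proof.
move=> C_closed; split=> [P2y a | C_total w_ex].
  by apply: contrapT => /forallNP /(reduction_sound C_closed); apply.
have [a aP] := reduction_complete (fun P2y => P2y w_ex).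
by have [b] := C_total a; apply: aP.
Qed.

End Reduction.

Theorem mainTheorem14 : Pi12_complete P2.
Proof.
split.
  apply/Pi12P; exists P2_refutation; split; first exact: P2_refutation_closed.
  exact: P2_forall_exists.
move=> T /Pi12P[C [C_closed TE]]; exists (reduction C); split.
  exact: reduction_continuous.
by move=> y; rewrite TE P2_reduction.
Qed.
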